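(* Let $u,w$ be words over $\{L,R\}$. If $w$ starts with $L$ and $Lu$ is derivable from $w$, then $LLu$ is derivable from $Lw$. Dually, if $w$ starts with $R$ and $Ru$ is derivable from $w$, then $RRu$ is derivable from $Rw$.
   Context: Words are finite strings (including the empty word) over $\{L,R\}$. A word $u$ is derivable from $w$ if it is obtained from $w$ by finitely many successive applications (in any order) of the following rules, where $v,v'$ denote arbitrary words: (1) $vRRv'\Rightarrow vRv'$; (1') $vLLv'\Rightarrow vLv'$; (2) $vLRv'\Rightarrow vv'$; (2') $vRLv'\Rightarrow vv'$; (3) $vv'\Rightarrow v'$ (tail formation). *)

From Stdlib Require Import List Relations.
Import ListNotations.

Inductive letter : Type := L | R.
Definition word := list letter.

Inductive step : word -> word -> Prop :=
| rule1  : forall v v', step (v ++ [R; R] ++ v') (v ++ [R] ++ v')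
| rule1' : forall v v', step (v ++ [L; L] ++ v') (v ++ [L] ++ v')
| rule2  : forall v v', step (v ++ [L; R] ++ v') (v ++ v')
| rule2' : forall v v', step (v ++ [R; L] ++ v') (v ++ v')
| rule3  : forall v v', step (v ++ v') v'.

Definition derivable (w u : word) : Prop := clos_refl_trans word step w u.

From Stdlib Require Import List Relations Lia.
Import ListNotations.

(* Tail formation can always be performed first: a derivation w => t factors
   as w = p ++ q with q => t using the length-non-increasing rules (1)-(2')
   only.  Those rules reduce every word c x to [] or [c], hence c c x to [c];
   so if c w' = p ++ q with p = c p', then c c p' q => c q => c c u. *)

Inductive contraction : word -> word -> Prop :=
| contraction_RR : contraction [R; R] [R]
| contraction_LL : contraction [L; L] [L]
| contraction_LR : contraction [L; R] []
| contraction_RL : contraction [R; L] [].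

Inductive local_step : word -> word -> Prop :=
| local_step_intro v M m v' :
    contraction M m -> local_step (v ++ M ++ v') (v ++ m ++ v').

Definition local_derivable : word -> word -> Prop :=
  clos_refl_trans word local_step.

Lemma contraction_length M m : contraction M m -> length m <= 1.
Proof. destruct 1; simpl; lia. Qed.

Lemma local_step_step a b : local_step a b -> step a b.
Proof. destruct 1 as [v M m v' H]; destruct H; constructor. Qed.

Lemma local_derivable_derivable a b : local_derivable a b -> derivable a b.
Proof.
  induction 1.
  - now apply rt_step, local_step_step.
  - apply rt_refl.
  - eapply rt_trans; eauto.
Qed.

Lemma step_local_or_tail a b : step a b -> local_step a b \/ exists p, a = p ++ b.
Proof.
  destruct 1 as [v v'|v v'|v v'|v v'|p b]; [left..| right; now exists p].
  - exact (local_step_intro v _ _ v' contraction_RR).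
  - exact (local_step_intro v _ _ v' contraction_LL).
  - exact (local_step_intro v _ _ v' contraction_LR).
  - exact (local_step_intro v _ _ v' contraction_RL).
Qed.

Lemma contraction_local_step M m : contraction M m -> local_step M m.
Proof.
  intro H; pose proof (local_step_intro [] _ _ [] H) as Hs.
  now rewrite !app_nil_r in Hs.
Qed.

Lemma local_step_app x y a b :
  local_step a b -> local_step (x ++ a ++ y) (x ++ b ++ y).
Proof.
  destruct 1 as [v M m v' H].
  replace (x ++ (v ++ M ++ v') ++ y) with ((x ++ v) ++ M ++ (v' ++ y))
    by now rewrite <- !app_assoc.
  replace (x ++ (v ++ m ++ v') ++ y) with ((x ++ v) ++ m ++ (v' ++ y))
    by now rewrite <- !app_assoc.
  now constructor.
Qed.

Lemma local_derivable_app x y a b :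
  local_derivable a b -> local_derivable (x ++ a ++ y) (x ++ b ++ y).
Proof.
  induction 1.
  - now apply rt_step, local_step_app.
  - apply rt_refl.
  - eapply rt_trans; eauto.
Qed.

Lemma local_derivable_cons c a b :
  local_derivable a b -> local_derivable (c :: a) (c :: b).
Proof.
  intro H; apply (local_derivable_app [c] []) in H.
  now rewrite !app_nil_r in H.
Qed.

Lemma short_app_eq_app (m v' l q : word) :
  length m <= 1 -> m ++ v' = l ++ q -> q = m ++ v' \/ exists l', v' = l' ++ q.
Proof.
  destruct m as [|x [|y m]]; simpl; intros Hm E; [eauto| |lia].
  destruct l as [|z l]; simpl in E; [now left|].
  injection E as _ E; eauto.
Qed.

Lemma local_step_suffix a b p q : local_step a b -> b = p ++ q ->
  exists p' q', a = p' ++ q' /\ local_derivable q' q.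
Proof.
  destruct 1 as [v M m v' H]; intro E.
  destruct (app_eq_app _ _ _ _ E) as [l [[-> ->] | [-> E']]].
  - exists p, (l ++ M ++ v'); split.
    + now rewrite <- app_assoc.
    + now apply rt_step, local_step_intro.
  - destruct (short_app_eq_app _ _ _ _ (contraction_length _ _ H) E')
      as [-> | [l' ->]].
    + exists v, (M ++ v'); split; [reflexivity|].
      now apply rt_step, (local_step_intro []).
    + exists (v ++ M ++ l'), q; split; [now rewrite <- !app_assoc | apply rt_refl].
Qed.

Lemma local_derivable_suffix a b p q : local_derivable a b -> b = p ++ q ->
  exists p' q', a = p' ++ q' /\ local_derivable q' q.
Proof.
  intro H; revert p q; induction H as [a b H| a| a b d _ IHab _ IHbd];
    intros p q E.
  - eapply local_step_suffix; eauto.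
  - exists p, q; split; [assumption | apply rt_refl].
  - destruct (IHbd _ _ E) as [p1 [q1 [E1 H1]]].
    destruct (IHab _ _ E1) as [p2 [q2 [E2 H2]]].
    exists p2, q2; split; [assumption | eapply rt_trans; eauto].
Qed.

Lemma derivable_tail_first w t : derivable w t ->
  exists p q, w = p ++ q /\ local_derivable q t.
Proof.
  induction 1 as [a b H| a| a b d _ [p1 [q1 [E1 H1]]] _ [p2 [q2 [E2 H2]]]].
  - destruct (step_local_or_tail _ _ H) as [Hl | [p ->]].
    + exists [], a; split; [reflexivity | now apply rt_step].
    + exists p, b; split; [reflexivity | apply rt_refl].
  - exists [], a; split; [reflexivity | apply rt_refl].
  - destruct (local_derivable_suffix _ _ _ _ H1 E2) as [p3 [q3 [-> H3]]].
    exists (p1 ++ p3), q3; split.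
    + now rewrite E1, app_assoc.
    + eapply rt_trans; eauto.
Qed.

Lemma cons_local_derivable c x :
  local_derivable (c :: x) [] \/ local_derivable (c :: x) [c].
Proof.
  revert c; induction x as [|d x IH]; intro c; [right; apply rt_refl|].
  destruct (IH d) as [H | H]; apply (local_derivable_cons c) in H;
    [right; exact H|].
  destruct c, d; [right | left | left | right]; eapply rt_trans; try exact H;
    apply rt_step, contraction_local_step; constructor.
Qed.

Lemma double_local_derivable c x : local_derivable (c :: c :: x) [c].
Proof.
  destruct (cons_local_derivable c x) as [H | H];
    apply (local_derivable_cons c) in H; [exact H|].
  eapply rt_trans; [exact H|].
  apply rt_step, contraction_local_step; destruct c; constructor.
Qed.

Lemma derivable_double_head c w' u :
  derivable (c :: w') (c :: u) -> derivable (c :: c :: w') (c :: c :: u).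
Proof.
  intro D; apply local_derivable_derivable.
  destruct (derivable_tail_first _ _ D) as [p [q [E Hq]]].
  apply (local_derivable_cons c) in Hq.
  eapply rt_trans; [|exact Hq].
  destruct p as [|c' p]; simpl in E; [rewrite E; apply rt_refl|].
  injection E as <- ->.
  exact (local_derivable_app [] q _ _ (double_local_derivable c p)).
Qed.

Theorem mainTheorem8 :
  forall u w : word,
    ((exists w', w = L :: w') -> derivable w (L :: u) -> derivable (L :: w) (L :: L :: u)) /\
    ((exists w', w = R :: w') -> derivable w (R :: u) -> derivable (R :: w) (R :: R :: u)).
Proof.
  intros u w; split; intros [w' ->]; apply derivable_double_head.
Qed.
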